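(* Let $f \in \mathbb{N}_0[x^{\pm 1}]$ satisfy $f(1) > 3$ and $|\operatorname{supp}(f)| > 1$. Then $f$ can be written as $f = g + h$ with $g, h$ irreducible elements of $\mathbb{N}_0[x^{\pm 1}]$.
   Context: $\mathbb{N}_0[x^{\pm 1}]$ denotes the semiring of Laurent polynomials in $x$ with nonnegative integer coefficients, under the usual addition and multiplication. For $f = \sum_i c_i x^{k_i}$ with all $c_i$ positive integers and the $k_i$ distinct integers, $\operatorname{supp}(f) = \{k_i\}$ is the set of exponents appearing in $f$, and $f(1)=\sum_i c_i$. The units of $\mathbb{N}_0[x^{\pm 1}]$ are exactly the monomials $x^k$, $k \in \mathbb{Z}$. An element $f$ is irreducible if it is nonzero, not a unit, and whenever $f = gh$ with $g,h \in \mathbb{N}_0[x^{\pm 1}]$, one of $g,h$ is a unit. *)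

(* with mathcomp-finmap.
   Laurent polynomials in N_0[x^{+-1}] are modelled as finitely supported
   functions  int -> nat  (exponent |-> coefficient), default value 0. *)
From HB Require Import structures.
From mathcomp Require Import all_boot all_order all_algebra.
From mathcomp Require Import finmap.
Set Implicit Arguments. Unset Strict Implicit. Unset Printing Implicit Defensive.
Local Open Scope fset_scope.

Definition lpoly := {fsfun int -> nat with 0%N}.

Definition lsupp (f : lpoly) : {fset int} := finsupp f.

Definition leval1 (f : lpoly) : nat := (\sum_(k <- lsupp f) f k)%N.

Definition lzero : lpoly := [fsfun n in (fset0 : {fset int}) => 0%N].

Definition lmono (k : int) : lpoly := [fsfun n in [fset k] => 1%N].

Definition ladd (g h : lpoly) : lpoly :=
  [fsfun n in lsupp g `|` lsupp h => (g n + h n)%N].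

Definition lmul (g h : lpoly) : lpoly :=
  [fsfun n in [fset (i + j)%R | i in lsupp g, j in lsupp h] =>
     (\sum_(i <- lsupp g) g i * h (n - i)%R)%N].

Definition lunit (u : lpoly) : Prop := exists v : lpoly, lmul u v = lmono 0.

Definition lirreducible (f : lpoly) : Prop :=
  f <> lzero /\ ~ lunit f /\
  forall g h : lpoly, f = lmul g h -> lunit g \/ lunit h.

(* A product of two factors with at least two terms each has, besides its
   extreme exponents b < t, exponents e, e' with b < e, e' < t and e + e' = b + t
   (a lowest exponent of one factor plus a highest one of the other), and its
   coefficient there is at least 2 when e = e'.  Hence a polynomial with some
   coefficient 1 is irreducible as soon as all its exponents except one extreme
   lie in the half of its support nearer to the other extreme, with coefficient at
   most 1 at the midpoint; so is p x^k for p prime.  If f has extreme exponents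
   m < M, one summand takes x^m and the part of f above (m + M)/2 except one copy
   of x^M, the other takes the rest.  A midpoint coefficient >= 2 is shared
   between the two summands instead, and when one side would be a single term,
   f(1) > 3 leaves room to split off x^m + x^e or 2 x^m (or their mirror images). *)

From mathcomp Require Import all_boot all_order all_algebra.
From mathcomp Require Import finmap zify.
From Stdlib Require Import Classical.
Set Implicit Arguments. Unset Strict Implicit. Unset Printing Implicit Defensive.
Import Order.TTheory GRing.Theory.
Local Open Scope fset_scope.
Implicit Types (f g h u v : lpoly) (i j k n : int).

Lemma lsuppE f n : (n \in lsupp f) = (f n != 0%N).
Proof. by rewrite mem_finsupp. Qed.

Lemma lzeroE n : lzero n = 0%N.
Proof. by rewrite fsfunE. Qed.

Lemma lmonoE k n : lmono k n = (n == k) :> nat.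
Proof. by rewrite fsfunE in_fset1; case: (n == k). Qed.

Lemma laddE g h n : ladd g h n = (g n + h n)%N.
Proof.
rewrite fsfunE in_fsetU !lsuppE.
by case: ifP => // /negbT; rewrite negb_or !negbK => /andP[/eqP-> /eqP->].
Qed.

Lemma lmulE u v n : lmul u v n = (\sum_(i <- lsupp u) u i * v (n - i)%R)%N.
Proof.
rewrite fsfunE; case: ifP => // /negbT nsum; rewrite big_seq big1 // => i.
rewrite lsuppE => ui; apply/eqP; rewrite muln_eq0; apply: contraNT nsum.
rewrite negb_or (negbTE ui) /= => vni; apply/imfset2P.
by exists i; rewrite ?lsuppE //; exists (n - i)%R; rewrite ?lsuppE // addrC subrK.
Qed.

Lemma lsupp_min f p : f p != 0%N ->
  exists2 m, f m != 0%N & forall n, f n != 0%N -> (m <= n)%R.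
Proof.
rewrite -lsuppE => fp.
have [i _ min_i] := @arg_minP _ _ (lsupp f) [` fp] xpredT val isT.
by exists (val i) => [|n]; rewrite -lsuppE ?fsvalP // => fn; apply: (min_i [` fn]).
Qed.

Lemma lsupp_max f p : f p != 0%N ->
  exists2 M, f M != 0%N & forall n, f n != 0%N -> (n <= M)%R.
Proof.
rewrite -lsuppE => fp.
have [i _ max_i] := @arg_maxP _ _ (lsupp f) [` fp] xpredT val isT.
by exists (val i) => [|n]; rewrite -lsuppE ?fsvalP // => fn; apply: (max_i [` fn]).
Qed.

Lemma lsupp_gt1P f :
  reflect (exists p q, [/\ p != q, f p != 0%N & f q != 0%N]) (1 < #|` lsupp f|)%N.
Proof.
apply: (iffP idP) => [|[p [q [pq fp fq]]]].
  case: (fset_0Vmem (lsupp f)) => [->|[p fp]]; first by rewrite cardfs0.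
  rewrite (cardfsD1 p) fp ltnS lt0n cardfs_eq0.
  case: (fset_0Vmem (lsupp f `\ p)) => [->|[q]]; first by rewrite eqxx.
  by rewrite in_fsetD1 => /andP[qp fq] _; exists q, p; rewrite -!lsuppE.
rewrite -!lsuppE in fp fq.
apply: leq_trans (fsubset_leq_card (_ : [fset p; q] `<=` lsupp f)).
  by rewrite cardfs2 pq.
by apply/fsubsetP => n; rewrite !inE => /orP[] /eqP->.
Qed.

Lemma lsupp_le1 f : (#|` lsupp f| <= 1)%N -> exists k, forall i, f i != 0%N -> i = k.
Proof.
rewrite leqNgt => /lsupp_gt1P nf2.
case: (fset_0Vmem (lsupp f)) => [f0|[k]]; last rewrite lsuppE => fk.
  by exists 0%R => i; rewrite -lsuppE f0.
by exists k => i fi; apply/eqP/negPn/negP => ik; apply: nf2; exists i, k.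
Qed.

Lemma lmul_neq0 u v n : lmul u v n != 0%N -> exists2 i, u i != 0%N & v (n - i)%R != 0%N.
Proof.
rewrite lmulE sum_nat_seq_neq0 => /hasP[i _ /=].
by rewrite muln_eq0 negb_or => /andP[ui vi]; exists i.
Qed.

Lemma lmul_ge_terms u v i i' n : i != i' ->
  (u i * v (n - i)%R + u i' * v (n - i')%R <= lmul u v n)%N.
Proof.
move=> ii'; rewrite lmulE.
have [ui0|ui] := eqVneq (u i) 0%N; have [ui'0|ui'] := eqVneq (u i') 0%N.
- by rewrite ui0 ui'0.
- rewrite ui0 (big_fsetD1 i') ?lsuppE //=; lia.
- rewrite ui'0 (big_fsetD1 i) ?lsuppE //=; lia.
rewrite (big_fsetD1 i) ?lsuppE // (big_fsetD1 i') ?in_fsetD1 ?lsuppE 1?eq_sym ?ii' //=.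
lia.
Qed.

Lemma lmul_ge_term u v i n : (u i * v (n - i)%R <= lmul u v n)%N.
Proof.
rewrite lmulE; have [->|ui] := eqVneq (u i) 0%N; first by rewrite mul0n.
by rewrite (big_fsetD1 i) ?lsuppE //= leq_addr.
Qed.

Lemma lmul_neq0_add u v i j : u i != 0%N -> v j != 0%N -> lmul u v (i + j)%R != 0%N.
Proof.
move=> ui vj; rewrite -lt0n; apply: leq_trans (lmul_ge_term u v i _).
have -> : (i + j - i)%R = j by lia.
by rewrite muln_gt0 !lt0n ui vj.
Qed.

Lemma lmul_uniq u v i n : (forall i', u i' != 0%N -> v (n - i')%R != 0%N -> i' = i) ->
  lmul u v n = (u i * v (n - i)%R)%N.
Proof.
move=> uniq_i; rewrite lmulE.
have [ui|ui0] := boolP (i \in lsupp u).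
  rewrite (big_fsetD1 i ui) /= big_seq big1 ?addn0 // => i'.
  rewrite in_fsetD1 lsuppE => /andP[i'i ui']; apply/eqP; rewrite muln_eq0.
  by apply: contraT; rewrite negb_or ui' /= => /(uniq_i _ ui') /eqP; rewrite (negbTE i'i).
move: (ui0); rewrite lsuppE negbK => /eqP->; rewrite big_seq big1 // => i'.
rewrite lsuppE => ui'; apply/eqP; rewrite muln_eq0; apply: contraT.
by rewrite negb_or ui' /= => /(uniq_i _ ui') ii'; rewrite -ii' lsuppE ui' in ui0.
Qed.

Lemma lmul_mono_l u v k n : (forall i, u i != 0%N -> i = k) ->
  lmul u v n = (u k * v (n - k)%R)%N.
Proof. by move=> uk; apply: lmul_uniq => i' /uk. Qed.

Lemma lmul_mono_r u v k n : (forall j, v j != 0%N -> j = k) ->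
  lmul u v n = (u (n - k)%R * v k)%N.
Proof.
move=> vk; rewrite (lmul_uniq (i := (n - k)%R)) => [|i' _ /vk]; last lia.
by congr (_ * v _)%N; lia.
Qed.

Lemma eq_lmono u k : (forall i, u i != 0%N -> i = k) -> u k = 1%N -> u = lmono k.
Proof.
move=> supp_k uk1; apply/fsfunP => n; rewrite lmonoE.
by case: (n =P k) => [->//|nk]; apply: contra_not_eq (@supp_k n) nk.
Qed.

Lemma lunitP u : lunit u <-> exists k, u = lmono k.
Proof.
split=> [[v uv]|[k ->]]; last first.
  exists (lmono (- k)); apply/fsfunP => n.
  rewrite (lmul_mono_l _ (k := k)) => [|i]; last by rewrite lmonoE; case: (i =P k).
  by rewrite !lmonoE eqxx mul1n; case: (n =P 0%R); case: (_ =P _) => //; lia.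
have /lmul_neq0[k uk vk] : lmul u v 0 != 0%N by rewrite uv lmonoE eqxx.
have supp_k i : u i != 0%N -> i = k.
  by move=> ui; have := lmul_neq0_add ui vk; rewrite uv lmonoE; case: eqP => //; lia.
have /esym/eqP : lmul u v 0 = (u k * v (0 - k)%R)%N by apply: lmul_mono_l.
rewrite uv lmonoE eqxx muln_eq1 => /andP[/eqP uk1 _].
by exists k; apply: eq_lmono.
Qed.

Lemma lmul_inner_pair u v : (1 < #|` lsupp u|)%N -> (1 < #|` lsupp v|)%N ->
  exists b t e e' : int,
  [/\ forall n, lmul u v n != 0%N -> (b <= n <= t)%R, lmul u v b != 0%N,
      lmul u v t != 0%N & (b < e < t)%R] /\
  [/\ lmul u v e != 0%N, lmul u v e' != 0%N, (e + e' = b + t)%R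
    & e = e' -> (1 < lmul u v e)%N].
Proof.
move=> /lsupp_gt1P[p [q [pq up uq]]] /lsupp_gt1P[p' [q' [pq' vp' vq']]].
have [i1 ui1 min_i] := lsupp_min up; have [i2 ui2 max_i] := lsupp_max up.
have [j1 vj1 min_j] := lsupp_min vp'; have [j2 vj2 max_j] := lsupp_max vp'.
have lt_i : (i1 < i2)%R.
  by have := min_i _ up; have := min_i _ uq; have := max_i _ up; have := max_i _ uq; lia.
have lt_j : (j1 < j2)%R.
  by have := min_j _ vp'; have := min_j _ vq'; have := max_j _ vp'; have := max_j _ vq'; lia.
exists (i1 + j1)%R, (i2 + j2)%R, (i1 + j2)%R, (i2 + j1)%R.
split; split; rewrite ?lmul_neq0_add //; try lia.
  move=> n /lmul_neq0[i ui vni].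
  by have := min_i _ ui; have := max_i _ ui; have := min_j _ vni; have := max_j _ vni; lia.
move=> e_e'; have /(lmul_ge_terms u v (i1 + j2)%R) : i1 != i2 by lia.
have -> : (i1 + j2 - i1)%R = j2 by lia.
have -> : (i1 + j2 - i2)%R = j1 by lia.
by move: ui1 ui2 vj1 vj2; rewrite -!lt0n; nia.
Qed.

Lemma lirreducible_intro g : (exists n, g n = 1%N) -> (1 < #|` lsupp g|)%N ->
  (forall u v, (1 < #|` lsupp u|)%N -> (1 < #|` lsupp v|)%N -> g <> lmul u v) ->
  lirreducible g.
Proof.
move=> [n0 gn0] /lsupp_gt1P[p [q [pq gp gq]]] no_split.
split; [|split].
- by move=> g0; move: gp; rewrite g0 lzeroE.
- case/lunitP=> k gk; move: pq gp gq; rewrite gk !lmonoE.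
  by case: (p =P k) => [->|]; case: (q =P k) => [->|]; rewrite ?eqxx.
move=> u v guv.
have [u1|u2] := leqP #|` lsupp u| 1; last have [v1|v2] := leqP #|` lsupp v| 1.
- have [k uk] := lsupp_le1 u1; left; apply/lunitP; exists k; apply: eq_lmono => //.
  have /eqP : (u k * v (n0 - k)%R)%N = 1%N by rewrite -lmul_mono_l // -guv.
  by rewrite muln_eq1 => /andP[/eqP].
- have [k vk] := lsupp_le1 v1; right; apply/lunitP; exists k; apply: eq_lmono => //.
  have /eqP : (u (n0 - k)%R * v k)%N = 1%N by rewrite -lmul_mono_r // -guv.
  by rewrite muln_eq1 => /andP[_ /eqP].
- by case: (no_split u v).
Qed.

Lemma lirreducible_top g (L t : int) :
  (exists n, g n = 1%N) -> (exists2 e, e != t & g e != 0%N) -> g t != 0%N ->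
  (forall n, g n != 0%N -> (L <= n <= t)%R) ->
  (forall e, g e != 0%N -> e != t -> (e + e <= L + t)%R) ->
  (forall e, (e + e = L + t)%R -> (g e <= 1)%N) ->
  lirreducible g.
Proof.
move=> g1 [e0 e0t ge0] gt supp_g low_g mid_g.
apply: lirreducible_intro => // [|u v u2 v2 guv]; first by apply/lsupp_gt1P; exists e0, t.
have [b [t' [e [e' [[supp_bt gb gt' bet] [ge ge' sum_ee' ee']]]]]] := lmul_inner_pair u2 v2.
rewrite -guv in supp_bt gb gt' ge ge' ee'.
have tt' : t' = t by have := supp_g _ gt'; have := supp_bt _ gt; lia.
(* e and e' lie in the lower half of [L, t] and add up to b + t >= L + t,
   so both are its midpoint. *)
have := supp_g _ gb; have := low_g _ ge; have := low_g _ ge'.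
have := ee'; have := mid_g e; lia.
Qed.

Lemma lirreducible_bottom g (b U : int) :
  (exists n, g n = 1%N) -> (exists2 e, e != b & g e != 0%N) -> g b != 0%N ->
  (forall n, g n != 0%N -> (b <= n <= U)%R) ->
  (forall e, g e != 0%N -> e != b -> (b + U <= e + e)%R) ->
  (forall e, (e + e = b + U)%R -> (g e <= 1)%N) ->
  lirreducible g.
Proof.
move=> g1 [e0 e0b ge0] gb supp_g high_g mid_g.
apply: lirreducible_intro => // [|u v u2 v2 guv]; first by apply/lsupp_gt1P; exists e0, b.
have [b' [t [e [e' [[supp_bt gb' gt bet] [ge ge' sum_ee' ee']]]]]] := lmul_inner_pair u2 v2.
rewrite -guv in supp_bt gb' gt ge ge' ee'.
have bb' : b' = b by have := supp_g _ gb'; have := supp_bt _ gb; lia.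
have := supp_g _ gt; have := high_g _ ge; have := high_g _ ge'.
have := ee'; have := mid_g e; lia.
Qed.

Lemma lirreducible_binomial g a b : a != b -> g a = 1%N -> g b = 1%N ->
  (forall n, n != a -> n != b -> g n = 0%N) -> lirreducible g.
Proof.
wlog lt_ab : a b / (a < b)%R => [hw ab ga gb gab|_ ga gb gab].
  have [/hw|/hw|eab] := ltgtP a b; last by rewrite eab eqxx in ab.
    exact.
  by apply; rewrite 1?eq_sym // => n nb na; apply: gab.
have supp_g n : g n != 0%N -> n = a \/ n = b.
  by case: (n =P a) => [|/eqP na]; [left|case: (n =P b) => [|/eqP nb]; [right|rewrite gab]].
apply: (lirreducible_top (L := a) (t := b)); first by exists a.
- by exists a; rewrite ?ga //; lia.
- by rewrite gb.
- by move=> n /supp_g; lia.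
- by move=> e /supp_g; lia.
by move=> e e_mid; case: (g e =P 0%N) => [->//|/eqP /supp_g]; lia.
Qed.

Lemma lirreducible_prime_mono g p k : prime p -> g k = p ->
  (forall n, n != k -> g n = 0%N) -> lirreducible g.
Proof.
move=> pr_p gk g0.
have supp_k n : g n != 0%N -> n = k by case: (n =P k) => // /eqP /g0 ->.
split; [|split].
- by move=> g_0; move: pr_p; rewrite -gk g_0 lzeroE.
- case/lunitP=> k' gk'; move: pr_p; rewrite -gk gk' lmonoE.
  by case: (_ == _).
move=> u v guv; have /lmul_neq0[i ui vki] : lmul u v k != 0%N.
  by rewrite -guv gk -lt0n prime_gt0.
have supp_u i' : u i' != 0%N -> i' = i.
  move=> ui'; have := lmul_neq0_add ui' vki; have := lmul_neq0_add ui vki.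
  by rewrite -guv => /supp_k + /supp_k; lia.
have supp_v j : v j != 0%N -> j = (k - i)%R.
  by move=> vj; have := lmul_neq0_add ui vj; rewrite -guv => /supp_k; lia.
have p_uv : p = (u i * v (k - i)%R)%N by rewrite -gk guv; apply: lmul_mono_l.
have /pred2P[ui1|uip] : (u i == 1%N) || (u i == p).
  by case/primeP: pr_p => _; apply; rewrite p_uv dvdn_mulr.
  by left; apply/lunitP; exists i; apply: eq_lmono.
right; apply/lunitP; exists (k - i)%R; apply: eq_lmono => //.
by move: p_uv (prime_gt1 pr_p); rewrite uip; nia.
Qed.

Definition lcap f (w : int -> nat) : lpoly := [fsfun n in lsupp f => minn (w n) (f n)].
Definition lrest f (w : int -> nat) : lpoly := [fsfun n in lsupp f => f n - w n]%N.

Lemma lcapE f w n : lcap f w n = minn (w n) (f n).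
Proof. by rewrite fsfunE lsuppE; case: eqP => [->|]; rewrite ?minn0. Qed.

Lemma lrestE f w n : lrest f w n = (f n - w n)%N.
Proof. by rewrite fsfunE lsuppE; case: eqP => [->|]. Qed.

Lemma ladd_cap_rest f w : ladd (lcap f w) (lrest f w) = f.
Proof.
apply/fsfunP => n; rewrite laddE lcapE lrestE.
by move: (w n) (f n) => a b; lia.
Qed.

Lemma leval1_seq f (s : seq int) : uniq s -> (forall n, f n != 0%N -> n \in s) ->
  leval1 f = (\sum_(n <- s) f n)%N.
Proof.
move=> uniq_s supp_s; rewrite [RHS](bigID (fun n => f n != 0%N)) /=.
rewrite [X in (_ + X)%N]big1 => [|n /negPn/eqP //].
rewrite addn0 -big_filter /leval1; apply: perm_big; apply: uniq_perm.
- exact: fset_uniq.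
- exact: filter_uniq.
by move=> n; rewrite mem_filter lsuppE; case: (f n =P 0%N) => //= /eqP /supp_s ->.
Qed.

Definition irreducible_sum2 f := exists g h, lirreducible g /\ lirreducible h /\ f = ladd g h.

Lemma irreducible_sum2_split f w :
  lirreducible (lcap f w) -> lirreducible (lrest f w) -> irreducible_sum2 f.
Proof. by exists (lcap f w), (lrest f w); rewrite ladd_cap_rest. Qed.

Section Split.
Variables (f : lpoly) (m M : int).
Hypotheses (lt_mM : (m < M)%R) (fm : f m != 0%N) (fM : f M != 0%N)
  (supp_f : forall n, f n != 0%N -> (m <= n <= M)%R).

Lemma irreducible_sum2_mid_heavy mu : (mu + mu = m + M)%R -> (1 < f mu)%N -> irreducible_sum2 f.
Proof.
move=> mid_mu f_mu.
pose w n := if n == m then 1%N else if (n + n == m + M)%R then (f n).-1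
  else if (m + M < n + n)%R && (n < M)%R then f n else 0%N.
apply: (@irreducible_sum2_split _ w).
  (* With the bound M - 1 instead of M, mu lies strictly above the midpoint. *)
  apply: (lirreducible_bottom (b := m) (U := (M - 1)%R)).
  - by exists m; rewrite lcapE /w eqxx; lia.
  - by exists mu; rewrite ?lcapE /w; repeat case: ifP => ?; lia.
  - by rewrite lcapE /w eqxx; lia.
  - by move=> n; rewrite lcapE /w; have := @supp_f n; repeat case: ifP => ?; lia.
  - by move=> n; rewrite lcapE /w; repeat case: ifP => ?; lia.
  - by move=> n; rewrite lcapE /w; repeat case: ifP => ?; lia.
apply: (lirreducible_top (L := m) (t := M)).
- by exists mu; rewrite lrestE /w; repeat case: ifP => ?; lia.
- by exists mu; rewrite ?lrestE /w; repeat case: ifP => ?; lia.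
- by rewrite lrestE /w; repeat case: ifP => ?; lia.
- by move=> n; rewrite lrestE /w; have := @supp_f n; repeat case: ifP => ?; lia.
- by move=> n; rewrite lrestE /w; have := @supp_f n; repeat case: ifP => ?; lia.
- by move=> n; rewrite lrestE /w; repeat case: ifP => ?; lia.
Qed.

(* Above (resp. below) the midpoint of [m, M], f has more than the single term
   x^M (resp. x^m). *)
Definition upper_heavy := exists e, (m + M < e + e)%R /\ ((e == M) < f e)%N.
Definition lower_heavy := exists e, (e + e < m + M)%R /\ ((e == m) < f e)%N.

Lemma irreducible_sum2_heavy : (forall e, (e + e = m + M)%R -> (f e <= 1)%N) ->
  upper_heavy -> lower_heavy -> irreducible_sum2 f.
Proof.
move=> mid_f [eu [eu_up f_eu]] [el [el_low f_el]].
pose w n := if n == m then 1%N else if (m + M < n + n)%R then (f n - (n == M))%N else 0%N.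
apply: (@irreducible_sum2_split _ w).
  apply: (lirreducible_bottom (b := m) (U := M)).
  - by exists m; rewrite lcapE /w eqxx; lia.
  - by exists eu; rewrite ?lcapE /w; repeat case: ifP => ?; lia.
  - by rewrite lcapE /w eqxx; lia.
  - by move=> n; rewrite lcapE /w; have := @supp_f n; repeat case: ifP => ?; lia.
  - by move=> n; rewrite lcapE /w; repeat case: ifP => ?; lia.
  - by move=> n; rewrite lcapE /w; repeat case: ifP => ?; lia.
apply: (lirreducible_top (L := m) (t := M)).
- by exists M; rewrite lrestE /w; repeat case: ifP => ?; lia.
- by exists el; rewrite ?lrestE /w; repeat case: ifP => ?; lia.
- by rewrite lrestE /w; repeat case: ifP => ?; lia.
- by move=> n; rewrite lrestE /w; have := @supp_f n; repeat case: ifP => ?; lia.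
- by move=> n; rewrite lrestE /w; have := @supp_f n; repeat case: ifP => ?; lia.
- by move=> n; rewrite lrestE /w; have := mid_f n; repeat case: ifP => ?; lia.
Qed.

Lemma irreducible_sum2_upper_light : f M = 1%N ->
  (forall e, f e != 0%N -> e != M -> (e + e <= m + M)%R) ->
  (forall e, (e + e = m + M)%R -> (f e <= 1)%N) ->
  (3 < leval1 f)%N -> irreducible_sum2 f.
Proof.
move=> fM1 low_f mid_f mass_f.
have [[e1 /and3P[e1m e1M fe1]]|only_mM] := classic (exists e, [&& e != m, e != M & f e != 0%N]).
  pose w n := ((n == m) + (n == e1))%N.
  apply: (@irreducible_sum2_split _ w).
    apply: (lirreducible_binomial (a := m) (b := e1)); rewrite ?lcapE /w; try lia.
    by move=> n; rewrite lcapE /w; lia.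
  have rest_M : lrest f w M = 1%N by rewrite lrestE /w; lia.
  apply: (lirreducible_top (L := m) (t := M)); rewrite ?rest_M //.
  - by exists M.
  - have [//|no_e] := classic (exists2 e, e != M & lrest f w e != 0%N).
    have rest0 n : n != M -> lrest f w n = 0%N.
      by move=> nM; apply/eqP/negPn/negP => rn; apply: no_e; exists n.
    have := rest0 m; have := rest0 e1; rewrite !lrestE /w.
    rewrite (@leval1_seq _ [:: m; e1; M]) ?big_cons ?big_nil in mass_f.
    + lia.
    + by rewrite /= !inE; lia.
    move=> n fn; rewrite !inE; have := rest0 n; rewrite lrestE /w; lia.
  - by move=> n; rewrite lrestE /w; have := @supp_f n; lia.
  - by move=> n; rewrite lrestE /w; have := @low_f n; lia.
  - by move=> n; rewrite lrestE /w; have := mid_f n; lia.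
have f0 n : n != m -> n != M -> f n = 0%N.
  by move=> nm nM; apply/eqP/negPn/negP => fn; apply: only_mM; exists n; rewrite nm nM fn.
have fm3 : (3 <= f m)%N.
  rewrite (@leval1_seq _ [:: m; M]) ?big_cons ?big_nil in mass_f; first lia.
    by rewrite /= !inE; lia.
  by move=> n fn; rewrite !inE; have := f0 n; lia.
pose w n := ((n == m) * 2)%N.
apply: (@irreducible_sum2_split _ w).
  apply: (lirreducible_prime_mono (p := 2) (k := m)) => //; rewrite ?lcapE /w.
    by rewrite eqxx; lia.
  by move=> n nm; rewrite lcapE /w; lia.
apply: (lirreducible_top (L := m) (t := M)).
- by exists M; rewrite lrestE /w; lia.
- by exists m; rewrite ?lrestE /w; lia.
- by rewrite lrestE /w; lia.
- by move=> n; rewrite lrestE /w; have := @supp_f n; lia.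
- by move=> n; rewrite lrestE /w; have := @low_f n; lia.
- by move=> n; rewrite lrestE /w; have := mid_f n; lia.
Qed.

Lemma irreducible_sum2_lower_light : f m = 1%N ->
  (forall e, f e != 0%N -> e != m -> (m + M <= e + e)%R) ->
  (forall e, (e + e = m + M)%R -> (f e <= 1)%N) ->
  (3 < leval1 f)%N -> irreducible_sum2 f.
Proof.
move=> fm1 high_f mid_f mass_f.
have [[e1 /and3P[e1m e1M fe1]]|only_mM] := classic (exists e, [&& e != m, e != M & f e != 0%N]).
  pose w n := ((n == M) + (n == e1))%N.
  apply: (@irreducible_sum2_split _ w).
    apply: (lirreducible_binomial (a := M) (b := e1)); rewrite ?lcapE /w; try lia.
    by move=> n; rewrite lcapE /w; lia.
  have rest_m : lrest f w m = 1%N by rewrite lrestE /w; lia.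
  apply: (lirreducible_bottom (b := m) (U := M)); rewrite ?rest_m //.
  - by exists m.
  - have [//|no_e] := classic (exists2 e, e != m & lrest f w e != 0%N).
    have rest0 n : n != m -> lrest f w n = 0%N.
      by move=> nm; apply/eqP/negPn/negP => rn; apply: no_e; exists n.
    have := rest0 M; have := rest0 e1; rewrite !lrestE /w.
    rewrite (@leval1_seq _ [:: m; e1; M]) ?big_cons ?big_nil in mass_f.
    + lia.
    + by rewrite /= !inE; lia.
    move=> n fn; rewrite !inE; have := rest0 n; rewrite lrestE /w; lia.
  - by move=> n; rewrite lrestE /w; have := @supp_f n; lia.
  - by move=> n; rewrite lrestE /w; have := @high_f n; lia.
  - by move=> n; rewrite lrestE /w; have := mid_f n; lia.
have f0 n : n != m -> n != M -> f n = 0%N.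
  by move=> nm nM; apply/eqP/negPn/negP => fn; apply: only_mM; exists n; rewrite nm nM fn.
have fM3 : (3 <= f M)%N.
  rewrite (@leval1_seq _ [:: m; M]) ?big_cons ?big_nil in mass_f; first lia.
    by rewrite /= !inE; lia.
  by move=> n fn; rewrite !inE; have := f0 n; lia.
pose w n := ((n == M) * 2)%N.
apply: (@irreducible_sum2_split _ w).
  apply: (lirreducible_prime_mono (p := 2) (k := M)) => //; rewrite ?lcapE /w.
    by rewrite eqxx; lia.
  by move=> n nM; rewrite lcapE /w; lia.
apply: (lirreducible_bottom (b := m) (U := M)).
- by exists m; rewrite lrestE /w; lia.
- by exists M; rewrite ?lrestE /w; lia.
- by rewrite lrestE /w; lia.
- by move=> n; rewrite lrestE /w; have := @supp_f n; lia.
- by move=> n; rewrite lrestE /w; have := @high_f n; lia.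
- by move=> n; rewrite lrestE /w; have := mid_f n; lia.
Qed.

Lemma irreducible_sum2_extremes : (3 < leval1 f)%N -> irreducible_sum2 f.
Proof.
move=> mass_f.
have [[mu mid_mu f_mu]|no_mid2] := classic (exists2 mu, (mu + mu = m + M)%R & (1 < f mu)%N).
  exact: irreducible_sum2_mid_heavy mid_mu f_mu.
have mid_f e : (e + e = m + M)%R -> (f e <= 1)%N.
  by move=> mid_e; rewrite leqNgt; apply/negP => f_e; apply: no_mid2; exists e.
have [up|not_up] := classic upper_heavy; last first.
  apply: irreducible_sum2_upper_light => // [|e fe eM].
    by case: (leqP (f M) 1) => [|fM2]; [lia|case: not_up; exists M; rewrite eqxx; lia].
  by rewrite leNgt; apply/negP => e_up; apply: not_up; exists e; rewrite (negbTE eM); lia.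
have [low|not_low] := classic lower_heavy; first exact: irreducible_sum2_heavy.
apply: irreducible_sum2_lower_light => // [|e fe em].
  by case: (leqP (f m) 1) => [|fm2]; [lia|case: not_low; exists m; rewrite eqxx; lia].
by rewrite leNgt; apply/negP => e_low; apply: not_low; exists e; rewrite (negbTE em); lia.
Qed.

End Split.

Theorem theorem1p1 (f : lpoly) :
  (3 < leval1 f)%N -> (1 < #|` lsupp f|)%N ->
  exists g h : lpoly, lirreducible g /\ lirreducible h /\ f = ladd g h.
Proof.
move=> mass_f /lsupp_gt1P[p [q [pq fp fq]]].
have [m fm min_m] := lsupp_min fp; have [M fM max_M] := lsupp_max fp.
have lt_mM : (m < M)%R.
  by have := min_m _ fp; have := min_m _ fq; have := max_M _ fp; have := max_M _ fq; lia.
apply: (irreducible_sum2_extremes lt_mM fm fM) => // n fn.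
by rewrite min_m ?max_M.
Qed.
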